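(* For all $(n,k)\in\mathcal{I}$ with $n\neq0$, writing $l=l_{n,k}$, $m=m_{n,k}$, $r=r_{n,k}$: (i) $M_{n,k}=L_{n,k}+R_{n,k}$; (ii) $\Sigma_{n,k}^{-1}=\big(h_m(l,m)\big)^{-1}+\big(h_m(m,r)\big)^{-1}$.
   Context: Let $d,m\geq 1$. Let $\alpha:[0,1]\to\mathbb{R}^{d\times d}$, $\sqrt{\Gamma}:[0,1]\to\mathbb{R}^{d\times m}$ be continuous, $\Gamma=\sqrt{\Gamma}\sqrt{\Gamma}^{T}$. Let $F(s,t)$ be the flow ($\partial_tF(s,t)=\alpha(t)F(s,t)$, $F(s,s)=I_d$), $h_u(s,t)=\int_s^t F(w,u)\Gamma(w)F(w,u)^Tdw$, $h=h_0$, $g(t)=F(0,t)$. Non-degeneracy: $F(u,v)h_u(u,v)F(u,v)^T$ is positive definite for all $0\le u<v\le1$ (this is the conditional covariance of $X_v$ given $X_u$ for the solution $X$ of $dX_t=\alpha X_tdt+\sqrt{\Gamma}dW_t$, $X_0=0$). $\mathcal{I}=\{(0,0)\}\cup\{(n,k):n\ge1,\ 0\le k<2^{n-1}\}$. Partition: fix $\rho\in(0,1)$ and reals $l_{n,k}<m_{n,k}<r_{n,k}$ ($n\ge1$) with $l_{1,0}=0$, $r_{1,0}=1$, $l_{n+1,2k}=l_{n,k}$, $r_{n+1,2k}=l_{n+1,2k+1}=m_{n,k}$, $r_{n+1,2k+1}=r_{n,k}$, $\max(r_{n,k}-m_{n,k},m_{n,k}-l_{n,k})<\rho(r_{n,k}-l_{n,k})$.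 For $n\ge1$: $\Sigma_{n,k}=h_m(l,m)h_m(l,r)^{-1}h_m(m,r)$; $\sigma_{n,k}$ is its lower-triangular Cholesky factor with positive diagonal ($\sigma_{n,k}\sigma_{n,k}^T=\Sigma_{n,k}$); $L_{n,k}=h(l,m)^{-1}g(m)^{-1}\sigma_{n,k}$, $R_{n,k}=h(m,r)^{-1}g(m)^{-1}\sigma_{n,k}$, $M_{n,k}=g(m)^T(\sigma_{n,k}^{-1})^T$. *)

From HB Require Import structures.
From mathcomp Require Import all_boot all_order all_algebra.
From mathcomp Require Import all_classical all_reals all_analysis.
Set Implicit Arguments. Unset Strict Implicit. Unset Printing Implicit Defensive.
Import Order.TTheory GRing.Theory Num.Theory.
Import numFieldNormedType.Exports.
Local Open Scope classical_set_scope.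
Local Open Scope ring_scope.

Definition Gam (R : realType) (d m : nat) (sG : R -> 'M[R]_(d, m)) (w : R)
  : 'M[R]_d := sG w *m (sG w)^T.

(* h_u(s,t) = \int_s^t F(w,u) Gamma(w) F(w,u)^T dw  (entrywise Lebesgue
   integral over [s,t]; only used with s < t) *)
Definition hmat (R : realType) (d m : nat) (F : R -> R -> 'M[R]_d)
  (sG : R -> 'M[R]_(d, m)) (u s t : R) : 'M[R]_d :=
  \matrix_(i < d, j < d)
    Rintegral lebesgue_measure `[s, t]
      (fun w => (F w u *m Gam sG w *m (F w u)^T) i j).

Definition posdef (R : realType) (d : nat) (A : 'M[R]_d) : Prop :=
  A^T = A /\ forall x : 'cV[R]_d, x != 0 -> 0 < (x^T *m A *m x) ord0 ord0.

Definition is_flow (R : realType) (d : nat) (alpha : R -> 'M[R]_d)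
  (F : R -> R -> 'M[R]_d) : Prop :=
  forall s : R, 0 <= s <= 1 ->
    F s s = 1%:M /\
    (forall i j, {within `[0, 1], continuous (fun t : R => F s t i j)}) /\
    (forall t : R, 0 < t < 1 -> forall i j,
       is_derive t 1 (fun t : R => F s t i j) ((alpha t *m F s t) i j)).

Definition is_cholesky (R : realType) (d : nat) (Sig sig : 'M[R]_d) : Prop :=
  (forall i j : 'I_d, (i < j)%N -> sig i j = 0) /\
  (forall i : 'I_d, 0 < sig i i) /\
  sig *m sig^T = Sig.

From HB Require Import structures.
From mathcomp Require Import all_boot all_order all_algebra.
From mathcomp Require Import all_classical all_reals all_analysis.
From mathcomp Require Import ring lra.
Import Order.TTheory GRing.Theory Num.Theory.
Import numFieldNormedType.Exports.
Local Open Scope classical_set_scope.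
Local Open Scope ring_scope.
Set Implicit Arguments. Unset Strict Implicit.

(* Additivity of the integral gives h_m(l,r) = A + B with A = h_m(l,m) and
   B = h_m(m,r), so Sigma = A (A + B)^-1 B has inverse B^-1 (A + B) A^-1 = A^-1 + B^-1;
   A and B are invertible because Sigma = sigma sigma^T with sigma triangular with a
   positive diagonal.  For (i), the
   cocycle identity F(w,u) = F(v,u) F(w,v), a consequence of uniqueness for the linear
   ODE (a Gronwall estimate on the squared Frobenius norm of the difference of two
   solutions), gives h_m = g(m) h g(m)^T, whence
   L + R = g(m)^T Sigma^-1 sigma = g(m)^T sigma^-T = M. *)

Section ContinuousWithin.
Variables (R : realType) (A : set R).

Lemma within_continuous_cst (c : R) : {within A, continuous (fun=> c)}.
Proof. by apply: continuous_subspaceT; exact: cst_continuous. Qed.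

Lemma within_continuousD (f g : R -> R) :
  {within A, continuous f} -> {within A, continuous g} ->
  {within A, continuous (fun t => f t + g t)}.
Proof. by move=> cf cg x; apply: continuousD; [exact: cf|exact: cg]. Qed.

Lemma within_continuousM (f g : R -> R) :
  {within A, continuous f} -> {within A, continuous g} ->
  {within A, continuous (fun t => f t * g t)}.
Proof. by move=> cf cg x; apply: continuousM; [exact: cf|exact: cg]. Qed.

Lemma within_continuous_sum (I : Type) (s : seq I) (f : I -> R -> R) :
  (forall i, {within A, continuous f i}) ->
  {within A, continuous (fun t => \sum_(i <- s) f i t)}.
Proof.
move=> cf; elim: s => [|i s IH].
  under eq_fun do rewrite big_nil; exact: within_continuous_cst.
by under eq_fun do rewrite big_cons; exact: within_continuousD.
Qed.

Lemma within_continuous_prod (I : Type) (s : seq I) (f : I -> R -> R) :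
  (forall i, {within A, continuous f i}) ->
  {within A, continuous (fun t => \prod_(i <- s) f i t)}.
Proof.
move=> cf; elim: s => [|i s IH].
  under eq_fun do rewrite big_nil; exact: within_continuous_cst.
by under eq_fun do rewrite big_cons; exact: within_continuousM.
Qed.

Lemma within_continuousV (f : R -> R) : (forall t, A t -> f t != 0) ->
  {within A, continuous f} -> {within A, continuous (fun t => (f t)^-1)}.
Proof.
move=> f_neq0 /subspace_continuousP cf; apply/subspace_continuousP => x Ax.
by apply: cvgV; [exact: f_neq0|exact: cf].
Qed.

Lemma within_continuous_norm (f : R -> R) :
  {within A, continuous f} -> {within A, continuous (fun t => `|f t|)}.
Proof.
move=> /subspace_continuousP cf; apply/subspace_continuousP => x Ax.
exact: cvg_norm (cf x Ax).
Qed.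

Definition mxcontinuous n p (M : R -> 'M[R]_(n, p)) :=
  forall i j, {within A, continuous (fun t => M t i j)}.

Lemma mxcontinuous_cst n p (M : 'M[R]_(n, p)) : mxcontinuous (fun=> M).
Proof. by move=> i j; exact: within_continuous_cst. Qed.

Lemma mxcontinuousB n p (M N : R -> 'M[R]_(n, p)) :
  mxcontinuous M -> mxcontinuous N -> mxcontinuous (fun t => M t - N t).
Proof.
move=> cM cN i j; under eq_fun do rewrite !mxE.
by move=> x; apply: continuousB; [exact: cM|exact: cN].
Qed.

Lemma mxcontinuous_mul n p q (M : R -> 'M[R]_(n, p)) (N : R -> 'M[R]_(p, q)) :
  mxcontinuous M -> mxcontinuous N -> mxcontinuous (fun t => M t *m N t).
Proof.
move=> cM cN i j; under eq_fun do rewrite mxE.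
by apply: within_continuous_sum => k; exact: within_continuousM.
Qed.

Lemma mxcontinuous_tr n p (M : R -> 'M[R]_(n, p)) :
  mxcontinuous M -> mxcontinuous (fun t => (M t)^T).
Proof. by move=> cM i j; under eq_fun do rewrite mxE; exact: cM. Qed.

Lemma mxcontinuous_det n (M : R -> 'M[R]_n) :
  mxcontinuous M -> {within A, continuous (fun t => \det (M t))}.
Proof.
move=> cM; apply: within_continuous_sum => s.
apply: within_continuousM; first exact: within_continuous_cst.
by apply: within_continuous_prod => i; exact: cM.
Qed.

Lemma mxcontinuous_inv n (M : R -> 'M[R]_n) : (forall t, A t -> M t \in unitmx) ->
  mxcontinuous M -> mxcontinuous (fun t => invmx (M t)).
Proof.
move=> M_unit cM i j.
have cofactor_continuous : {within A, continuous (fun t =>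
    (-1) ^+ (j + i) * \det (row' j (col' i (M t))))}.
  apply: within_continuousM; first exact: within_continuous_cst.
  by apply: mxcontinuous_det => a b; under eq_fun do rewrite !mxE; exact: cM.
have cdetV : {within A, continuous (fun t => (\det (M t))^-1)}.
  apply: within_continuousV; last exact: mxcontinuous_det.
  by move=> t At; rewrite -unitfE -unitmxE; exact: M_unit.
apply: subspace_eq_continuous (within_continuousM cdetV cofactor_continuous).
by move=> t; rewrite inE => At; rewrite /from_subspace /invmx M_unit // !mxE.
Qed.

End ContinuousWithin.

Lemma mxcontinuousW (R : realType) (A B : set R) n p (M : R -> 'M[R]_(n, p)) :
  B `<=` A -> mxcontinuous A M -> mxcontinuous B M.
Proof. by move=> BA cM i j; exact: continuous_subspaceW (cM i j). Qed.

Section IntervalIntegral.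
Variable R : realType.
Local Notation mu := (@lebesgue_measure R).
Local Notation Rint s t f := (Rintegral mu `[s, t] f).

Lemma continuous_itv_integrable (f : R -> R) (s t : R) :
  {within `[s, t], continuous f} -> mu.-integrable `[s, t] (EFin \o f).
Proof. by apply: continuous_compact_integrable; exact: segment_compact. Qed.

Lemma Rintegral_itv_sum (I : Type) (r : seq I) (f : I -> R -> R) (s t : R) :
  (forall i, {within `[s, t], continuous f i}) ->
  Rint s t (fun x => \sum_(i <- r) f i x) = \sum_(i <- r) Rint s t (f i).
Proof.
move=> cf; elim: r => [|i r IH].
  by under eq_Rintegral do rewrite big_nil; rewrite big_nil Rintegral_cst // mul0r.
under eq_Rintegral do rewrite big_cons.
rewrite big_cons RintegralD ?IH //; first exact: continuous_itv_integrable.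
by apply: continuous_itv_integrable; exact: within_continuous_sum.
Qed.

Lemma Rintegral_itv_split (f : R -> R) (l m r : R) : l <= m -> m <= r ->
  {within `[l, r], continuous f} -> Rint l r f = Rint l m f + Rint m r f.
Proof.
move=> lm mr cf; have intf := continuous_itv_integrable cf.
rewrite -(@Rintegral_itv_obnd_cbnd _ m (BRight r)); last first.
  by apply: integrableS intf => //; apply: subset_itv; rewrite bnd_simp.
by rewrite -(@Rintegral_itvB _ _ _ _ m intf) ?bnd_simp // addrC subrK.
Qed.

Definition mxRintegral n p (s t : R) (Y : R -> 'M[R]_(n, p)) : 'M[R]_(n, p) :=
  \matrix_(i, j) Rint s t (fun w => Y w i j).

Variables (s t : R).

Lemma eq_mxRintegral n p (Y Z : R -> 'M[R]_(n, p)) :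
  (forall w, s <= w <= t -> Y w = Z w) -> mxRintegral s t Y = mxRintegral s t Z.
Proof.
move=> YZ; apply/matrixP => i j; rewrite !mxE.
by apply: eq_Rintegral => w; rewrite inE /= in_itv /= => /YZ ->.
Qed.

Lemma mxRintegral_mull m n p (A : 'M[R]_(m, n)) (Y : R -> 'M[R]_(n, p)) :
  mxcontinuous `[s, t] Y -> mxRintegral s t (fun w => A *m Y w) = A *m mxRintegral s t Y.
Proof.
move=> cY; apply/matrixP => i j; rewrite !mxE.
under eq_Rintegral do rewrite mxE.
rewrite Rintegral_itv_sum; last first.
  by move=> k; apply: within_continuousM; [exact: within_continuous_cst|exact: cY].
apply: eq_bigr => k _; rewrite mxE RintegralZl //.
exact/continuous_itv_integrable/cY.
Qed.

Lemma mxRintegral_mulr m n p (Y : R -> 'M[R]_(m, n)) (B : 'M[R]_(n, p)) :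
  mxcontinuous `[s, t] Y -> mxRintegral s t (fun w => Y w *m B) = mxRintegral s t Y *m B.
Proof.
move=> cY; apply/matrixP => i j; rewrite !mxE.
under eq_Rintegral do rewrite mxE.
rewrite Rintegral_itv_sum; last first.
  by move=> k; apply: within_continuousM; [exact: cY|exact: within_continuous_cst].
apply: eq_bigr => k _; rewrite mxE RintegralZr //.
exact/continuous_itv_integrable/cY.
Qed.

Lemma mxRintegral_itv_split n p (m : R) (Y : R -> 'M[R]_(n, p)) : s <= m -> m <= t ->
  mxcontinuous `[s, t] Y -> mxRintegral s t Y = mxRintegral s m Y + mxRintegral m t Y.
Proof.
move=> sm mt cY; apply/matrixP => i j; rewrite !mxE.
exact: Rintegral_itv_split.
Qed.

End IntervalIntegral.

Section FrobeniusNorm.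
Variables (R : realFieldType) (n p : nat).

Definition frob2 (D : 'M[R]_(n, p)) : R := \sum_i \sum_j D i j ^+ 2.

Lemma frob2_ge0 (D : 'M[R]_(n, p)) : 0 <= frob2 D.
Proof. by apply: sumr_ge0 => i _; apply: sumr_ge0 => j _; exact: sqr_ge0. Qed.

Lemma sqr_entry_le_frob2 (D : 'M[R]_(n, p)) i j : D i j ^+ 2 <= frob2 D.
Proof.
rewrite /frob2 (bigD1 i) //= (bigD1 j) //= -addrA lerDl.
apply: addr_ge0; first by apply: sumr_ge0 => k _; exact: sqr_ge0.
by apply: sumr_ge0 => k _; apply: sumr_ge0 => l _; exact: sqr_ge0.
Qed.

Lemma frob2_eq0 (D : 'M[R]_(n, p)) : frob2 D = 0 -> D = 0.
Proof.
move=> D0; apply/matrixP => i j; rewrite mxE; apply/eqP; rewrite -sqrf_eq0.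
by rewrite eq_le sqr_ge0 andbT -D0 sqr_entry_le_frob2.
Qed.

Lemma norm_entry_mul_le_frob2 (D : 'M[R]_(n, p)) i j k l :
  `|D i j| * `|D k l| <= frob2 D.
Proof.
have := sqr_entry_le_frob2 D i j; have := sqr_entry_le_frob2 D k l.
rewrite -(real_normK (num_real (D i j))) -(real_normK (num_real (D k l))).
have := sqr_ge0 (`|D i j| - `|D k l|); rewrite sqrrB mulr2n; lra.
Qed.

Lemma norm_frob2_inner_mulmx_le (a : 'M[R]_n) (D : 'M[R]_(n, p)) (K : R) :
  (forall i k, `|a i k| <= K) ->
  `|\sum_i \sum_j D i j * (a *m D) i j| <= (n * p * n)%:R * K * frob2 D.
Proof.
move=> aK.
have term i j k : `|D i j * (a i k * D k j)| <= K * frob2 D.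
  rewrite !normrM mulrCA.
  apply: ler_pM; rewrite ?mulr_ge0 ?aK ?norm_entry_mul_le_frob2 //.
have entry i j : `|D i j * (a *m D) i j| <= n%:R * K * frob2 D.
  rewrite mxE mulr_sumr; apply: le_trans (ler_norm_sum _ _ _) _.
  apply: le_trans (ler_sum _ (fun k _ => term i j k)) _.
  by rewrite sumr_const card_ord -[in leLHS]mulr_natl mulrA.
apply: le_trans (ler_norm_sum _ _ _) _.
apply: le_trans (ler_sum _ (fun i _ => ler_norm_sum _ _ _)) _.
apply: le_trans (ler_sum _ (fun i _ => ler_sum _ (fun j _ => entry i j))) _.
rewrite !sumr_const !card_ord le_eqVlt; apply/orP; left.
by apply/eqP; ring.
Qed.

End FrobeniusNorm.

Lemma is_derive_expRM (R : realType) (k x : R) :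
  is_derive x 1 (fun t => expR (k * t)) (expR (k * x) * k).
Proof.
have dk : is_derive x 1 (k *: @id R) (k *: 1) by apply: is_deriveZ; exact: is_derive_id.
have := is_derive1_comp (is_derive_expR ((k *: @id R) x)) dk.
by rewrite /= /GRing.scale /= mulr1.
Qed.

Section LinearODE.
Variables (R : realType) (a b : R).

(* Multiplying by [expR (- C t)], resp. [expR (C t)], makes [f] nonincreasing, resp.
   nondecreasing, so [f] vanishes on both sides of [s]. *)
Lemma gronwall_zero (f df : R -> R) (C s : R) :
  {within `[a, b], continuous f} -> (forall t, a <= t <= b -> 0 <= f t) ->
  (forall t, a < t < b -> is_derive t 1 f (df t)) ->
  (forall t, a < t < b -> `|df t| <= C * f t) ->
  a <= s <= b -> f s = 0 -> forall t, a <= t <= b -> f t = 0.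
Proof.
move=> cf f_ge0 fdf dfC sab fs0 t tab.
pose u k t := f t * expR (k * t).
have du k x : a < x < b -> is_derive x 1 (u k) (expR (k * x) * (k * f x + df x)).
  move=> xab; apply: is_derive_eq; first exact: is_deriveM (fdf x xab) (is_derive_expRM k x).
  by rewrite /GRing.scale /=; ring.
have u_derivable k x : x \in `]a, b[ -> derivable (u k) x 1.
  by rewrite in_itv => /(du k x) [].
have u'E k x : x \in `]a, b[ -> (u k)^`()%classic x = expR (k * x) * (k * f x + df x).
  by rewrite in_itv => /(du k x) ?; rewrite derive1E derive_val.
have cu k : {within `[a, b], continuous (u k)}.
  apply: within_continuousM cf _; apply: continuous_subspaceT => x.
  have [expR_derivable _] := is_derive_expRM k x.
  exact/differentiable_continuous/derivable1_diffP.
have itv_ab x : a <= x <= b -> x \in `[a, b] by rewrite in_itv.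
suff : u (if s <= t then - C else C) t <= 0.
  by rewrite /u pmulr_lle0 ?expR_gt0 // => ft_le0; apply/eqP; rewrite eq_le ft_le0 f_ge0.
have us0 k : u k s = 0 by rewrite /u fs0 mul0r.
case: (leP s t) => [st | ts].
- rewrite -(us0 (- C)).
  apply: (@ler0_derive1_le_cc R _ a b (u_derivable _) _ (cu _)) => //; try exact: itv_ab.
  move=> x xab; rewrite u'E // pmulr_rle0 ?expR_gt0 //.
  by move: xab; rewrite in_itv => /dfC; rewrite ler_norml => /andP[_]; lra.
- rewrite -(us0 C).
  apply: (@ger0_derive1_le_cc R _ a b (u_derivable _) _ (cu _));
    try exact: itv_ab; last exact: ltW.
  move=> x xab; rewrite u'E // pmulr_rge0 ?expR_gt0 //.
  by move: xab; rewrite in_itv => /dfC; rewrite ler_norml => /andP[+ _]; lra.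
Qed.

Lemma mxcontinuous_bounded n p (M : R -> 'M[R]_(n, p)) : mxcontinuous `[a, b] M ->
  exists K, forall t, a <= t <= b -> forall i j, `|M t i j| <= K.
Proof.
move=> cM; have [ab | ba] := leP a b; last by exists 0 => t /andP[ta tb]; lra.
pose N t := \sum_i \sum_j `|M t i j|.
have [c _ Nmax] : exists2 c, c \in `[a, b] & forall t, t \in `[a, b] -> N t <= N c.
  apply: EVT_max ab _; apply: within_continuous_sum => i.
  by apply: within_continuous_sum => j; exact/within_continuous_norm/cM.
exists (N c) => t tab i j; apply: le_trans (Nmax t _); last by rewrite in_itv.
rewrite /N (bigD1 i) //= (bigD1 j) //= -addrA lerDl.
apply: addr_ge0; first by apply: sumr_ge0.
by apply: sumr_ge0 => k _; exact: sumr_ge0.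
Qed.

Variables (d : nat) (alpha : R -> 'M[R]_d).
Hypothesis alpha_continuous : mxcontinuous `[a, b] alpha.

Definition solves_linear_ode p (X : R -> 'M[R]_(d, p)) := forall t, a < t < b ->
  forall i j, is_derive t 1 (fun t => X t i j) ((alpha t *m X t) i j).

Lemma solves_linear_ode_mulmxr p q (X : R -> 'M[R]_(d, p)) (C : 'M[R]_(p, q)) :
  solves_linear_ode X -> solves_linear_ode (fun t => X t *m C).
Proof.
move=> dX t tab i j.
have -> : (fun t => (X t *m C) i j) = \sum_k (C k j *: (fun t => X t i k)).
  by apply/funext => x; rewrite fct_sumE mxE; apply: eq_bigr => k _; rewrite mulrC.
apply: is_derive_eq; first by apply: is_derive_sum => k; exact/is_deriveZ/dX.
by rewrite mulmxA mxE; apply: eq_bigr => k _; rewrite mulrC.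
Qed.

Lemma linear_ode_zero p (D : R -> 'M[R]_(d, p)) (s : R) :
  mxcontinuous `[a, b] D -> solves_linear_ode D ->
  a <= s <= b -> D s = 0 -> forall t, a <= t <= b -> D t = 0.
Proof.
move=> cD dD sab Ds0 t tab; apply: frob2_eq0.
have [K alphaK] := mxcontinuous_bounded alpha_continuous.
pose df t := 2 * \sum_i \sum_j D t i j * (alpha t *m D t) i j.
apply: (@gronwall_zero (fun t => frob2 (D t)) df (2 * ((d * p * d)%:R * K)) s) => //.
- apply: within_continuous_sum => i; apply: within_continuous_sum => j.
  exact: within_continuousM.
- by move=> ? _; exact: frob2_ge0.
- move=> u uab; have -> : (fun t => frob2 (D t)) = \sum_i \sum_j (fun t => D t i j) ^+ 2.
    by apply/funext => v; rewrite /frob2 fct_sumE; apply: eq_bigr => i _; rewrite fct_sumE.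
  apply: is_derive_eq; first by apply: is_derive_sum => i; apply: is_derive_sum => j;
    exact/is_deriveX/dD.
  rewrite /df mulr_sumr; apply: eq_bigr => i _; rewrite mulr_sumr; apply: eq_bigr => j _.
  by rewrite /GRing.scale /= expr1 mulrA.
- move=> u /andP[au ub]; rewrite /df normrM ger0_norm // -mulrA ler_pM2l //.
  by apply: norm_frob2_inner_mulmx_le => i k; apply: alphaK; rewrite !ltW.
- by rewrite Ds0; apply: big1 => i _; apply: big1 => j _; rewrite mxE expr0n.
Qed.

Lemma linear_ode_uniq p (X Y : R -> 'M[R]_(d, p)) (s : R) :
  mxcontinuous `[a, b] X -> mxcontinuous `[a, b] Y ->
  solves_linear_ode X -> solves_linear_ode Y ->
  a <= s <= b -> X s = Y s -> forall t, a <= t <= b -> X t = Y t.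
Proof.
move=> cX cY dX dY sab XYs t tab; apply: subr0_eq.
apply: (@linear_ode_zero p (fun t => X t - Y t) s) => //; first exact: mxcontinuousB.
- move=> u uab i j.
  have -> : (fun t => (X t - Y t) i j) = (fun t => X t i j) - (fun t => Y t i j).
    by apply/funext => v; rewrite !mxE.
  apply: is_derive_eq (is_deriveB (dX u uab i j) (dY u uab i j)) _.
  by rewrite mulmxBr !mxE.
- by rewrite /= XYs subrr.
Qed.

End LinearODE.

Section Flow.
Variables (R : realType) (d : nat) (alpha : R -> 'M[R]_d) (F : R -> R -> 'M[R]_d).
Hypotheses (alpha_continuous : mxcontinuous `[0, 1] alpha) (F_flow : is_flow alpha F).

Lemma flow_continuous s : 0 <= s <= 1 -> mxcontinuous `[0, 1] (F s).
Proof. by move=> /F_flow[_ []]. Qed.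

Lemma flow_solves s : 0 <= s <= 1 -> solves_linear_ode 0 1 alpha (F s).
Proof. by move=> /F_flow[_ []]. Qed.

Lemma flow_cocycle s w t : 0 <= s <= 1 -> 0 <= w <= 1 -> 0 <= t <= 1 ->
  F w t = F s t *m F w s.
Proof.
move=> s01 w01.
apply: (@linear_ode_uniq R 0 1 d alpha alpha_continuous d (F w) (fun t => F s t *m F w s) s).
- exact: flow_continuous.
- by apply: mxcontinuous_mul; [exact: flow_continuous|exact: mxcontinuous_cst].
- exact: flow_solves.
- exact/solves_linear_ode_mulmxr/flow_solves.
- exact: s01.
- by have [-> _] := F_flow s01; rewrite mul1mx.
Qed.

Lemma flow_mulmx_inv s w : 0 <= s <= 1 -> 0 <= w <= 1 -> F s w *m F w s = 1%:M.
Proof. by move=> s01 w01; rewrite -flow_cocycle //; have [] := F_flow w01. Qed.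

Lemma flow_unitmx s w : 0 <= s <= 1 -> 0 <= w <= 1 -> F s w \in unitmx.
Proof. by move=> s01 w01; have [] := mulmx1_unit (flow_mulmx_inv s01 w01). Qed.

Lemma invmx_flow s w : 0 <= s <= 1 -> 0 <= w <= 1 -> invmx (F s w) = F w s.
Proof.
move=> s01 w01; have uF := flow_unitmx s01 w01.
by rewrite -[RHS](mulKmx uF) flow_mulmx_inv // mulmx1.
Qed.

(* The flow is continuous in its initial time because [F w u = F 0 u (F 0 w)^-1]. *)
Lemma flow_continuous_source u : 0 <= u <= 1 -> mxcontinuous `[0, 1] (fun w => F w u).
Proof.
have O01 : (0 : R) <= (0 : R) <= (1 : R) by rewrite lexx ler01.
move=> u01 i j; apply: (subspace_eq_continuous (f := fun w => (F 0 u *m invmx (F 0 w)) i j)).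
  by move=> w; rewrite inE /= in_itv /= => w01; rewrite invmx_flow // -flow_cocycle.
apply: mxcontinuous_mul; first exact: mxcontinuous_cst.
apply: mxcontinuous_inv; last exact: flow_continuous.
by move=> w; rewrite /mkset in_itv /=; exact: flow_unitmx.
Qed.

Variables (q : nat) (sG : R -> 'M[R]_(d, q)).
Hypothesis sG_continuous : mxcontinuous `[0, 1] sG.

Lemma mxcontinuous_hmat_integrand u : 0 <= u <= 1 ->
  mxcontinuous `[0, 1] (fun w => F w u *m Gam sG w *m (F w u)^T).
Proof.
move=> u01; have cFu := flow_continuous_source u01.
apply: mxcontinuous_mul; last exact: mxcontinuous_tr.
apply: mxcontinuous_mul => //.
by apply: mxcontinuous_mul => //; exact: mxcontinuous_tr.
Qed.

Lemma hmat_itv_split u l mid r : 0 <= u <= 1 -> 0 <= l -> l <= mid -> mid <= r -> r <= 1 ->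
  hmat F sG u l r = hmat F sG u l mid + hmat F sG u mid r.
Proof.
move=> u01 l0 lm mr r1; apply: mxRintegral_itv_split lm mr _.
apply: mxcontinuousW (mxcontinuous_hmat_integrand u01).
by apply: subset_itv; rewrite bnd_simp.
Qed.

Lemma hmat_rebase u v s t : 0 <= u <= 1 -> 0 <= v <= 1 -> 0 <= s -> t <= 1 ->
  hmat F sG u s t = F v u *m hmat F sG v s t *m (F v u)^T.
Proof.
move=> u01 v01 s0 t1.
have sub01 : `[s, t] `<=` `[0, 1] by apply: subset_itv; rewrite bnd_simp.
have hmatE w : hmat F sG w s t =
  mxRintegral s t (fun x => F x w *m Gam sG x *m (F x w)^T) by [].
have cv := mxcontinuousW sub01 (mxcontinuous_hmat_integrand v01).
rewrite !hmatE -mxRintegral_mull // -mxRintegral_mulr; last first.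
  by apply: mxcontinuous_mul => //; exact: mxcontinuous_cst.
apply: eq_mxRintegral => w /andP[sw wt].
have w01 : 0 <= w <= 1 by rewrite (le_trans s0 sw) (le_trans wt t1).
by rewrite (flow_cocycle v01 w01 u01) trmx_mul !mulmxA.
Qed.

End Flow.

Section MatrixInverse.
Variables (R : fieldType) (n : nat).
Implicit Types A B G Q S : 'M[R]_n.

Lemma invmxM A B : A \in unitmx -> B \in unitmx -> invmx (A *m B) = invmx B *m invmx A.
Proof.
move=> uA uB; have uAB : A *m B \in unitmx by rewrite unitmx_mul uA uB.
have AB_inv : A *m B *m (invmx B *m invmx A) = 1%:M.
  by rewrite mulmxA mulmxK // mulmxV.
by rewrite -[LHS]mulmx1 -AB_inv mulmxA mulVmx ?mul1mx.
Qed.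

Lemma mulmx_invmx_congruence G Q : G \in unitmx -> Q \in unitmx ->
  G^T *m invmx (G *m Q *m G^T) *m G = invmx Q.
Proof.
move=> uG uQ; have uGT : G^T \in unitmx by rewrite unitmx_tr.
have uGQ : G *m Q \in unitmx by rewrite unitmx_mul uG uQ.
by rewrite invmxM // invmxM // !mulmxA mulmxV // mul1mx mulmxKV.
Qed.

Lemma invmx_parallel_sum A B : A \in unitmx -> B \in unitmx -> A + B \in unitmx ->
  invmx (A *m invmx (A + B) *m B) = invmx A + invmx B.
Proof.
move=> uA uB uAB; have uAiAB : A *m invmx (A + B) \in unitmx.
  by rewrite unitmx_mul uA unitmx_inv.
rewrite invmxM // invmxM ?unitmx_inv // invmxK mulmxDl mulmxV // mulmxDr mulmx1.
by rewrite mulmxA mulVmx // mul1mx addrC.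
Qed.

Lemma invmx_mul_tr_mulmx S : S \in unitmx -> invmx (S *m S^T) *m S = (invmx S)^T.
Proof.
move=> uS; have uST : S^T \in unitmx by rewrite unitmx_tr.
by rewrite invmxM // -mulmxA mulVmx // mulmx1 trmx_inv.
Qed.

Lemma invmx_parallel_sum_congruence G s A B A0 B0 : G \in unitmx -> s \in unitmx ->
  s *m s^T = A *m invmx (A + B) *m B -> A = G *m A0 *m G^T -> B = G *m B0 *m G^T ->
  G^T *m (invmx s)^T = invmx A0 *m invmx G *m s + invmx B0 *m invmx G *m s /\
  invmx (A *m invmx (A + B) *m B) = invmx A + invmx B.
Proof.
move=> uG us sigma_sq hA hB.
have : A *m invmx (A + B) *m B \in unitmx by rewrite -sigma_sq unitmx_mul unitmx_tr us.
rewrite !unitmx_mul unitmx_inv => /andP[/andP[uA uAB] uB].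
have uA0 : A0 \in unitmx by move: uA; rewrite hA !unitmx_mul => /andP[/andP[]].
have uB0 : B0 \in unitmx by move: uB; rewrite hB !unitmx_mul => /andP[/andP[]].
split; last exact: invmx_parallel_sum.
rewrite -(mulmx_invmx_congruence uG uA0) -(mulmx_invmx_congruence uG uB0) -hA -hB.
rewrite !(mulmxK uG) -mulmxDl -mulmxDr -invmx_parallel_sum // -sigma_sq.
by rewrite -mulmxA invmx_mul_tr_mulmx.
Qed.

End MatrixInverse.

Lemma cholesky_factor_unitmx (R : realType) n (S s : 'M[R]_n) : is_cholesky S s ->
  s \in unitmx.
Proof.
move=> [s_lower [s_diag _]].
rewrite unitmxE unitfE det_trig; last exact/is_trig_mxP.
by rewrite gt_eqF // prodr_gt0.
Qed.

Lemma dyadic_partition_bounds (R : realDomainType) (l mid r : nat -> nat -> R) :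
  l 1%N 0%N = 0 -> r 1%N 0%N = 1 ->
  (forall n k, (1 <= n)%N -> (k < 2 ^ n.-1)%N ->
     [/\ l n k <= mid n k <= r n k, l n.+1 k.*2 = l n k, r n.+1 k.*2 = mid n k,
         l n.+1 k.*2.+1 = mid n k & r n.+1 k.*2.+1 = r n k]) ->
  forall n k, (1 <= n)%N -> (k < 2 ^ n.-1)%N -> 0 <= l n k /\ r n k <= 1.
Proof.
move=> l10 r10 split; elim => [//|[_ k _|n IH k _ hk]].
  by rewrite expn0 ltnS leqn0 => /eqP ->; rewrite l10 r10.
have hk2 : (k./2 < 2 ^ n)%N by rewrite ltn_half_double -mul2n -expnS.
have [/andP[lm mr] l2 r2 l2' r2'] := split n.+1 k./2 isT hk2.
have [l_ge0 r_le1] := IH k./2 isT hk2.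
rewrite -(odd_double_half k); case: (odd k).
- by rewrite add1n l2' r2'; split=> //; exact: le_trans lm.
- by rewrite add0n l2 r2; split=> //; exact: le_trans mr r_le1.
Qed.

Unset Implicit Arguments.

Theorem proposition3 (R : realType) (d m : nat)
  (alpha : R -> 'M[R]_d) (sG : R -> 'M[R]_(d, m)) (F : R -> R -> 'M[R]_d)
  (rho : R) (l mid r : nat -> nat -> R) (sig : nat -> nat -> 'M[R]_d) :
  (0 < d)%N -> (0 < m)%N ->
  (forall i j, {within `[0, 1], continuous (fun t : R => alpha t i j)}) ->
  (forall i j, {within `[0, 1], continuous (fun t : R => sG t i j)}) ->
  is_flow alpha F ->
  (forall u v, 0 <= u -> u < v -> v <= 1 ->
     posdef (F u v *m hmat F sG u u v *m (F u v)^T)) ->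
  0 < rho < 1 ->
  l 1%N 0%N = 0 -> r 1%N 0%N = 1 ->
  (forall n k, (1 <= n)%N -> (k < 2 ^ n.-1)%N ->
     (l n k < mid n k /\ mid n k < r n k) /\
     (l n.+1 k.*2 = l n k /\ r n.+1 k.*2 = mid n k) /\
     (l n.+1 k.*2.+1 = mid n k /\ r n.+1 k.*2.+1 = r n k) /\
     (r n k - mid n k < rho * (r n k - l n k) /\
      mid n k - l n k < rho * (r n k - l n k))) ->
  (forall n k, (1 <= n)%N -> (k < 2 ^ n.-1)%N ->
     is_cholesky
       (hmat F sG (mid n k) (l n k) (mid n k)
        *m invmx (hmat F sG (mid n k) (l n k) (r n k))
        *m hmat F sG (mid n k) (mid n k) (r n k))
       (sig n k)) ->
  forall n k, (1 <= n)%N -> (k < 2 ^ n.-1)%N ->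
    let lk := l n k in let mk := mid n k in let rk := r n k in
    let h := hmat F sG 0 in
    let g := fun t => F 0 t in
    let Sig := hmat F sG mk lk mk *m invmx (hmat F sG mk lk rk)
               *m hmat F sG mk mk rk in
    let L := invmx (h lk mk) *m invmx (g mk) *m sig n k in
    let Rm := invmx (h mk rk) *m invmx (g mk) *m sig n k in
    let M := (g mk)^T *m (invmx (sig n k))^T in
    M = L + Rm /\
    invmx Sig = invmx (hmat F sG mk lk mk) + invmx (hmat F sG mk mk rk).
Proof.
move=> _ _ alpha_cont sG_cont F_flow _ _ l10 r10 part chol n k n1 k_lt; cbv zeta.
have [[lm mr] _] := part n k n1 k_lt.
have [l_ge0 r_le1] : 0 <= l n k /\ r n k <= 1.
  apply: (dyadic_partition_bounds l10 r10) => // n' k' n'1 k'_lt.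
  by have [[? ?] [[-> ->] [[-> ->] _]]] := part n' k' n'1 k'_lt; rewrite !ltW.
have O01 : (0 : R) <= (0 : R) <= (1 : R) by rewrite lexx ler01.
have mk01 : 0 <= mid n k <= 1.
  by rewrite (le_trans l_ge0 (ltW lm)) (le_trans (ltW mr) r_le1).
have [_ [_ sigma_sq]] := chol n k n1 k_lt.
have hsplit := hmat_itv_split alpha_cont F_flow sG_cont mk01 l_ge0 (ltW lm) (ltW mr) r_le1.
rewrite hsplit in sigma_sq *.
apply: invmx_parallel_sum_congruence sigma_sq _ _.
- exact: flow_unitmx.
- exact: cholesky_factor_unitmx (chol n k n1 k_lt).
- by apply: hmat_rebase; rewrite // (le_trans (ltW mr) r_le1).
- by apply: hmat_rebase; rewrite // (le_trans l_ge0 (ltW lm)).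
Qed.
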